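(* For any finite set $P$ of prime numbers, there is a generalized Euclid sequence with seed $P$ that contains every prime number.
   Context: Given a finite set $\{p_1,\ldots,p_k\}$ of distinct primes, for any $I\subseteq\{1,\ldots,k\}$ put $N_I=\prod_{i\in I}p_i+\prod_{i\in\{1,\ldots,k\}\setminus I}p_i$ (empty products equal $1$); $N_I>1$ is coprime to $p_1\cdots p_k$. A generalized Euclid sequence with seed $\{p_1,\ldots,p_k\}$ is an infinite sequence of primes $p_1,p_2,\ldots$ beginning with the seed primes (in some order) such that for every $j\ge k$, $p_{j+1}$ is a prime factor of $N_I$ for some $I\subseteq\{1,\ldots,j\}$ (formed with $p_1,\ldots,p_j$ in place of $p_1,\ldots,p_k$). Equivalently, $p_{j+1}$ is a prime divisor of $d+n/d$ for some positive divisor $d$ of $n=p_1\cdots p_j$. *)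

From mathcomp Require Import all_boot.
Set Implicit Arguments. Unset Strict Implicit. Unset Printing Implicit Defensive.

Definition gen_euclid_seq (P : seq nat) (p : nat -> nat) : Prop :=
  (forall i, prime (p i)) /\
  perm_eq [seq p i | i <- iota 0 (size P)] P /\
  (forall j, size P <= j ->
     exists d, 0 < d /\ d %| \prod_(i < j) p i /\
               p j %| d + (\prod_(i < j) p i) %/ d).

(* Fix a prime q not dividing the product n of the current primes, and suppose
   that no extension ever yields a value d + n/d divisible by q.  Along
   extensions the set D of residues mod q of the divisors of n only grows, so it
   becomes constant; its multiplicative stabiliser J is then a subgroup of F_q^*,
   of some order e, containing every prime that can be appended and hence every
   value d + n/d.  As N + u^2 = u (u + N/u), where N = n mod q, this gives
   (N + u^2)^e = 1 on J.  Summing binomial expansions over J, whose power sums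
   vanish except at multiples of e, excludes e odd and 4 <= e < q - 1.  If
   J = F_q^*, then -N is never a square (a square root a would be a divisor
   residue with a + N/a = 0), so appendable primes are quadratic residues and
   (N + u^2)^m = u^m for q = 2m + 1; power sums again exclude m >= 3.  In the
   remaining cases e = 2 and q = 5 every appendable prime is ±1 mod q, which
   forces n ≡ -2 mod q forever; appending a prime ≡ -1 dividing n + 1 breaks
   this.  Hence q is eventually reached, and interleaving such extensions
   gives a Euclid sequence through every prime. *)

From mathcomp Require Import all_boot all_algebra finfield cyclic zify ring.
From Stdlib Require Import Classical IndefiniteDescription.
Set Implicit Arguments. Unset Strict Implicit. Unset Printing Implicit Defensive.

Lemma dvdn_ltn_mul3 d x : x < 3 * d -> (d %| x) = (x \in [:: 0; d; 2 * d]).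
Proof.
move=> x_lt; rewrite !inE; apply/idP/idP => [/dvdnP[k x_kd] | /or3P[] /eqP->].
- by move: x_lt; rewrite x_kd; case: k x_kd => [|[|[|k]]] _; rewrite ?eqxx ?orbT //; nia.
- exact: dvdn0.
- exact: dvdnn.
- exact: dvdn_mull.
Qed.

Lemma prime_ndvd_bin p n k : prime p -> k <= n < p -> ~~ (p %| 'C(n, k)).
Proof.
move=> p_pr /andP[k_le n_lt].
have fact_ndvd m : m < p -> ~~ (p %| m`!).
  elim: m => [|m IH] m_lt; first by rewrite fact0 dvdn1 neq_ltn prime_gt1 ?orbT.
  by rewrite factS Euclid_dvdM // negb_or IH 1?ltnW // andbT gtnNdvd.
by apply: contra (fact_ndvd n n_lt) => p_dvd; rewrite -(bin_fact k_le) dvdn_mulr.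
Qed.

Lemma ex_stable_measure (T : Type) (R : T -> T -> Prop) (f : T -> nat) (b : nat) x :
    R x x -> (forall y z w, R y z -> R z w -> R y w) -> (forall y, f y <= b) ->
  exists2 y, R x y & forall z, R y z -> f z <= f y.
Proof.
move=> Rxx R_trans f_le; suff stable k y : R x y -> b - f y <= k ->
    exists2 y', R x y' & forall z, R y' z -> f z <= f y'.
  exact: (stable b x Rxx (leq_subr _ _)).
elim: k y => [|k IH] y Rxy f_ge.
  by exists y => // z _; have := f_le z; lia.
have [[z Ryz f_lt] | no_larger] := classic (exists2 z, R y z & f y < f z).
  by apply: (IH z (R_trans _ _ _ Rxy Ryz)); have := f_le z; lia.
exists y => // z Ryz; rewrite leqNgt; apply/negP => f_lt; apply: no_larger; by exists z.
Qed.

(** * Euclid extensions *)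

Local Notation prodn s := (\prod_(x <- s) x)%N.

Definition euclid_factor (n q : nat) : Prop :=
  exists d, [/\ 0 < d, d %| n & q %| d + n %/ d].

Inductive euclid_ext (s : seq nat) : seq nat -> Prop :=
| euclid_ext_refl : euclid_ext s s
| euclid_ext_rcons t r : euclid_ext s t -> prime r -> euclid_factor (prodn t) r ->
    euclid_ext s (rcons t r).

Lemma euclid_ext_trans s t u : euclid_ext s t -> euclid_ext t u -> euclid_ext s u.
Proof. by move=> st; elim=> // u' r _ IH; apply: euclid_ext_rcons. Qed.

Lemma euclid_ext_prefix s t : euclid_ext s t -> prefix s t.
Proof.
elim=> [|t' r _ st' _ _]; first exact: prefix_refl.
exact: prefix_trans st' (prefix_rcons _ _).
Qed.

Lemma euclid_ext_prime s t : all prime s -> euclid_ext s t -> all prime t.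
Proof. by move=> s_pr; elim=> // t' r _ IH r_pr _; rewrite all_rcons r_pr. Qed.

Lemma euclid_ext_nth s t j : euclid_ext s t -> size s <= j < size t ->
  prime (nth 0 t j) /\ euclid_factor (prodn (take j t)) (nth 0 t j).
Proof.
elim=> [|t' r _ IH r_pr rt'] /andP[s_le_j]; first by rewrite ltnNge s_le_j.
rewrite -cats1 size_cat addn1 ltnS leq_eqVlt => /orP[/eqP-> | j_lt].
  by rewrite take_size_cat // nth_cat ltnn subnn.
by rewrite takel_cat ?(ltnW j_lt) // nth_cat j_lt; apply: IH; rewrite s_le_j.
Qed.

Lemma prodn_prime_gt0 s : all prime s -> 0 < prodn s.
Proof. by move=> /allP s_pr; rewrite big_seq prodn_cond_gt0 // => p /s_pr/prime_gt0. Qed.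

Lemma prodn_rcons s r : prodn (rcons s r) = prodn s * r.
Proof. by rewrite -cats1 big_cat big_seq1. Qed.

Lemma euclid_factor_exists s : all prime s -> exists2 r, prime r & euclid_factor (prodn s) r.
Proof.
move=> s_pr; have n1_gt1 : 1 < 1 + prodn s by have := prodn_prime_gt0 s_pr; lia.
exists (pdiv (1 + prodn s)); first exact: pdiv_prime.
by exists 1; rewrite dvd1n divn1 pdiv_dvd.
Qed.

Import GRing.Theory.
Local Open Scope ring_scope.

Lemma natr_mulr_closed (R : pzSemiRingType) (S : {pred R}) n : mulr_closed S ->
  (0 < n)%N -> (forall p, prime p -> (p %| n)%N -> p%:R \in S) -> n%:R \in S.
Proof.
move=> [S1 SM]; elim/ltn_ind: n => n IH n_gt0 Sp.
have [n_le1 | n_gt1] := leqP n 1; first by have -> : n = 1%N by lia.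
have pn := pdiv_dvd n; have pn_gt0 := pdiv_gt0 n.
rewrite -(divnK pn) natrM; apply: SM; last exact: Sp (pdiv_prime _) pn.
apply: IH.
- by rewrite ltn_Pdiv ?prime_gt1 ?pdiv_prime.
- by rewrite divn_gt0 // dvdn_leq.
- by move=> p p_pr p_dvd; apply: Sp => //; exact: dvdn_trans p_dvd (dvdn_div pn).
Qed.

Lemma big_ord_filter (R : nmodType) n (P : pred nat) (F : nat -> R) ks :
    uniq ks -> (forall i, (i \in ks) = (i < n)%N && P i) ->
  \sum_(i < n | P i) F i = \sum_(k <- ks) F k.
Proof.
move=> ks_uniq ksE; rewrite -big_mkord -big_filter; apply: perm_big.
apply: uniq_perm => [|//|i]; first exact/filter_uniq/iota_uniq.
by rewrite mem_filter mem_index_iota ksE andbC.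
Qed.

Section MulClosedSet.
Variables (F : finFieldType) (J : {set F}).
Hypotheses (J_neq0 : 0 \notin J) (J1 : 1 \in J)
  (JM : {in J &, forall x y, x * y \in J}).

Let neq0J u : u \in J -> u != 0. Proof. by apply: contraTneq => ->. Qed.

Lemma big_mulJ (R : Type) (idx : R) (op : Monoid.com_law idx) (f : F -> R) u :
  u \in J -> \big[op/idx]_(v in J) f (u * v) = \big[op/idx]_(v in J) f v.
Proof.
move=> Ju; have mulu_inj : injective ( *%R u) := mulfI (neq0J Ju).
have imJ : [set u * v | v in J] = J.
  apply/eqP; rewrite eqEcard card_imset // leqnn andbT.
  by apply/subsetP=> _ /imsetP[v Jv ->]; exact: JM.
by rewrite -{2}imJ big_imset //; move=> x y _ _ /mulu_inj.
Qed.

Lemma cardJ_gt0 : (0 < #|J|)%N.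
Proof. by apply/card_gt0P; exists 1. Qed.

Lemma exprJ_card u : u \in J -> u ^+ #|J| = 1.
Proof.
move=> Ju; have prodJ_neq0 : \prod_(v in J) v != 0 by apply/prodf_neq0 => v /neq0J.
apply: (mulIf prodJ_neq0); rewrite mul1r -prodrMl.
exact: (big_mulJ _ id Ju).
Qed.

Lemma sumJ_expr i : \sum_(u in J) u ^+ i = if (#|J| %| i)%N then #|J|%:R else 0.
Proof.
case: ifP => [/dvdnP[k ->] | ndvd].
  by rewrite -sumr_const; apply: eq_bigr => u Ju; rewrite mulnC exprM exprJ_card // expr1n.
have [u Ju ui_neq1] : exists2 u, u \in J & u ^+ i != 1.
  apply/exists_inP; rewrite -negb_forall_in; apply: contraFN ndvd => /forall_inP J_root.
  apply/negPn/negP; rewrite -lt0n => r_gt0.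
  have rootsJ : all (i %% #|J|).-unity_root (enum J).
    apply/allP => v; rewrite mem_enum unity_rootE => Jv.
    rewrite -(eqP (J_root v Jv)) {2}(divn_eq i #|J|) exprD mulnC exprM.
    by rewrite exprJ_card // expr1n mul1r.
  have := max_unity_roots r_gt0 rootsJ (enum_uniq (mem J)).
  by rewrite -cardE leqNgt ltn_mod cardJ_gt0.
have sum_mulu : \sum_(v in J) v ^+ i = u ^+ i * \sum_(v in J) v ^+ i.
  rewrite mulr_sumr -{1}(big_mulJ _ (fun v => v ^+ i) Ju).
  by apply: eq_bigr => v _; rewrite exprMn.
have : (1 - u ^+ i) * \sum_(v in J) v ^+ i = 0 by rewrite mulrBl mul1r -sum_mulu subrr.
by move/eqP; rewrite mulf_eq0 subr_eq0 eq_sym (negbTE ui_neq1) => /eqP.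
Qed.

Lemma sumJ_binom_sqr (N : F) h s :
  \sum_(u in J) (N + u ^+ 2) ^+ h * u ^+ s =
  \sum_(i < h.+1 | (#|J| %| 2 * i + s)%N) N ^+ (h - i) *+ 'C(h, i) * #|J|%:R.
Proof.
under eq_bigr => u _ do rewrite exprDn mulr_suml.
rewrite exchange_big [RHS]big_mkcond /=; apply: eq_bigr => i _.
have -> : \sum_(u in J) (N ^+ (h - i) * (u ^+ 2) ^+ i) *+ 'C(h, i) * u ^+ s =
          N ^+ (h - i) *+ 'C(h, i) * \sum_(u in J) u ^+ (2 * i + s).
  by rewrite mulr_sumr; apply: eq_bigr => u _; rewrite exprD exprM !mulrnAl mulrA.
by rewrite sumJ_expr; case: ifP; rewrite ?mulr0.
Qed.

Lemma sumJ_binom_sqr_eq (N : F) h c s : {in J, forall u, (N + u ^+ 2) ^+ h = u ^+ c} ->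
  (if (#|J| %| c + s)%N then #|J|%:R else 0) =
  \sum_(i < h.+1 | (#|J| %| 2 * i + s)%N) N ^+ (h - i) *+ 'C(h, i) * #|J|%:R.
Proof.
move=> hc; rewrite -sumJ_binom_sqr -sumJ_expr.
by apply: eq_bigr => u Ju; rewrite hc // exprD.
Qed.

End MulClosedSet.

Lemma add_sqr_shift (F : fieldType) (N u : F) : u != 0 -> N + u ^+ 2 = u * (u + N / u).
Proof. by move=> u_neq0; rewrite mulrDr mulrCA divff // mulr1 addrC. Qed.

Section FiniteFieldSquares.
Variables (F : finFieldType) (m : nat).
Hypothesis cardF : #|F| = (2 * m).+1.

Lemma expf_card_pred (x : F) : x != 0 -> x ^+ (2 * m) = 1.
Proof. by move=> x_neq0; apply: (mulfI x_neq0); rewrite mulr1 -exprS -cardF expf_card. Qed.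

Lemma expf_half_sign (x : F) : x != 0 -> x ^+ m = 1 \/ x ^+ m = -1.
Proof.
move=> x_neq0; have /eqP : (x ^+ m) ^+ 2 = 1 by rewrite -exprM mulnC expf_card_pred.
by rewrite sqrf_eq1 => /orP[/eqP | /eqP]; [left | right].
Qed.

Lemma sqrf_of_expf_half (x : F) : x ^+ m = 1 -> exists a, x = a ^+ 2.
Proof.
move=> xm1; have m_gt0 : (0 < m)%N.
  have : (1 < #|F|)%N by apply/card_gt1P; exists 0, 1; rewrite eq_sym oner_neq0.
  by rewrite cardF; lia.
have x_neq0 : x != 0.
  by apply: contra_eq_neq xm1 => ->; rewrite expr0n gtn_eqF // eq_sym oner_neq0.
have [z _ prim_z] : exists2 z, z \in enum [set~ (0 : F)] & (2 * m).-primitive_root z.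
  apply/hasP/has_prim_root; rewrite ?muln_gt0 ?enum_uniq // -?cardE ?cardsC1 ?cardF //.
  by apply/allP => y; rewrite mem_enum in_setC1 unity_rootE => /expf_card_pred ->.
have [i x_zi] := prim_rootP prim_z (expf_card_pred x_neq0).
have /dvdnP[k ik] : (2 %| i)%N.
  have : (2 * m %| i * m)%N by rewrite (prim_order_dvd prim_z) exprM -x_zi xm1.
  by rewrite dvdn_pmul2r.
by exists (z ^+ k); rewrite x_zi -exprM -ik.
Qed.

End FiniteFieldSquares.

Lemma euclid_value_closed (R : pzSemiRingType) (S : {pred R}) t0 : mulr_closed S ->
    (forall t r, euclid_ext t0 t -> prime r -> euclid_factor (prodn t) r -> r%:R \in S) ->
  forall t d, euclid_ext t0 t -> (0 < d)%N -> (d %| prodn t)%N -> (d + prodn t %/ d)%:R \in S.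
Proof.
move=> S_closed S_step t d t0t d_gt0 d_dvd.
apply: natr_mulr_closed => // [|r r_pr r_dvd]; first by rewrite addn_gt0 d_gt0.
by apply: S_step t0t r_pr _; exists d.
Qed.

(** * Residues of divisors modulo a prime that is never reached *)

Section EuclidFactorResidues.
Variable q : nat.
Hypothesis q_prime : prime q.
Local Notation F := 'F_q.

Lemma natF_eq0 n : ((n%:R : F) == 0) = (q %| n)%N.
Proof. by rewrite (dvdn_pcharf (pchar_Fp q_prime)). Qed.

Lemma natF_neq0 n : (0 < n < q)%N -> (n%:R : F) != 0.
Proof. by move=> /andP[n_gt0 n_lt]; rewrite natF_eq0 gtnNdvd. Qed.

Definition divisor_residues n : {set F} := [set x | x \in [seq d%:R | d <- divisors n]].

Lemma divisor_residuesP n x : (0 < n)%N ->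
  reflect (exists2 d, (d %| n)%N & x = d%:R) (x \in divisor_residues n).
Proof.
move=> n_gt0; rewrite inE; apply: (iffP mapP) => [[d] | [d]].
  by rewrite -dvdn_divisors //; exists d.
by exists d; rewrite // -dvdn_divisors.
Qed.

Lemma divisor_residues_dvd m n : (0 < n)%N -> (m %| n)%N ->
  divisor_residues m \subset divisor_residues n.
Proof.
move=> n_gt0 mn; have m_gt0 : (0 < m)%N by exact: dvdn_gt0 mn.
apply/subsetP => x /(divisor_residuesP _ m_gt0)[d dm ->].
by apply/divisor_residuesP => //; exists d => //; exact: dvdn_trans mn.
Qed.

Variable s0 : seq nat.
Hypotheses (s0_prime : all prime s0) (q_ndvd_s0 : ~~ (q %| prodn s0)%N).
Hypothesis no_factor : forall t, euclid_ext s0 t -> ~ euclid_factor (prodn t) q.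

Local Notation N t := ((prodn t)%:R : F).

Lemma q_ndvd_ext t : euclid_ext s0 t -> ~~ (q %| prodn t)%N.
Proof.
elim=> // t' r s0t' IH r_pr rt'; rewrite prodn_rcons Euclid_dvdM // negb_or IH /=.
by rewrite dvdn_prime2 //; apply/eqP => qr; apply: (no_factor s0t'); rewrite qr.
Qed.

Lemma prodn_ext_gt0 t : euclid_ext s0 t -> (0 < prodn t)%N.
Proof. by move=> s0t; exact: prodn_prime_gt0 (euclid_ext_prime s0_prime s0t). Qed.

Lemma N_neq0 t : euclid_ext s0 t -> N t != 0.
Proof. by move=> s0t; rewrite natF_eq0 q_ndvd_ext. Qed.

Lemma divisorF_neq0 t d : euclid_ext s0 t -> (d %| prodn t)%N -> (d%:R : F) != 0.
Proof.
by move=> s0t dt; rewrite natF_eq0; apply: contra (q_ndvd_ext s0t) => /dvdn_trans->.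
Qed.

Lemma natr_euclid_value t d : euclid_ext s0 t -> (d %| prodn t)%N ->
  ((d + prodn t %/ d)%:R : F) = d%:R + N t / d%:R.
Proof. by move=> s0t dt; rewrite natrD natr_div // unitfE (divisorF_neq0 s0t dt). Qed.

Lemma euclid_value_neq0 t d : euclid_ext s0 t -> (0 < d)%N -> (d %| prodn t)%N ->
  ((d + prodn t %/ d)%:R : F) != 0.
Proof.
by move=> s0t d_gt0 dt; rewrite natF_eq0; apply/negP => q_dvd; apply: (no_factor s0t); exists d.
Qed.

(* Then 1 + n ≡ ±1 forces n ≡ -2 along every extension, while appending a
   prime r ≡ -1 dividing 1 + n sends n to 2. *)
Lemma sqr1_steps_contra t0 : euclid_ext s0 t0 -> (2 : F) != 0 ->
  ~ (forall t r, euclid_ext t0 t -> prime r -> euclid_factor (prodn t) r ->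
       (r%:R : F) ^+ 2 = 1).
Proof.
move=> s0t0 two_neq0 sqr1.
have sqr1_closed : mulr_closed [pred x : F | x ^+ 2 == 1].
  by split=> [|x y]; rewrite !inE ?expr1n // exprMn => /eqP-> /eqP->; rewrite mulr1.
have N_eq t : euclid_ext t0 t -> N t = -2.
  move=> t0t; have s0t := euclid_ext_trans s0t0 t0t.
  have : ((1 + prodn t %/ 1)%:R : F) ^+ 2 = 1.
    apply/eqP; apply: (euclid_value_closed sqr1_closed _ t0t) => // t' r' t0t' r_pr rt'.
    by rewrite inE (sqr1 t' r').
  rewrite divn1 natrD mulr1n => /eqP; rewrite sqrf_eq1 => /orP[] /eqP N1.
    by move: (N_neq0 s0t); rewrite -(addKr 1 (N t)) N1 addNr eqxx.
  by apply: (@addrI _ 1); rewrite N1; ring.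
have [r r_primes r_neq1] : exists2 r, r \in primes (1 + prodn t0) & (r%:R : F) != 1.
  apply/hasP; apply: contraT => /hasPn r_eq1.
  have : ((1 + prodn t0)%:R : F) == 1.
    apply: (natr_mulr_closed (S := [pred x : F | x == 1])) => // [| p p_pr p_dvd].
      by split=> [|x y]; rewrite !inE // => /eqP-> /eqP->; rewrite mulr1.
    by have := r_eq1 p; rewrite mem_primes p_pr p_dvd negbK; apply.
  rewrite natrD mulr1n (N_eq t0 (euclid_ext_refl _)) -subr_eq0 addrAC subrr add0r.
  by rewrite oppr_eq0 (negbTE two_neq0).
move: r_primes; rewrite mem_primes => /and3P[r_pr _ r_dvd].
have r_step : euclid_factor (prodn t0) r by exists 1%N; rewrite divn1.
have r_eqN1 : (r%:R : F) = -1.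
  have /eqP := sqr1 _ _ (euclid_ext_refl t0) r_pr r_step.
  by rewrite sqrf_eq1 (negbTE r_neq1) => /eqP.
have := N_eq _ (euclid_ext_rcons (euclid_ext_refl t0) r_pr r_step).
rewrite prodn_rcons natrM (N_eq _ (euclid_ext_refl t0)) r_eqN1 => E.
have : (2 : F) * 2 = -2 * -1 - -2 by ring.
by rewrite E subrr => /eqP; rewrite mulf_eq0 orbb (negbTE two_neq0).
Qed.

Local Notation D t := (divisor_residues (prodn t)).

Lemma divisor_residues_ext t t' : euclid_ext s0 t -> euclid_ext t t' -> D t \subset D t'.
Proof.
move=> s0t tt'; have := prodn_ext_gt0 (euclid_ext_trans s0t tt').
have /prefixP[e ->] := euclid_ext_prefix tt'; rewrite big_cat /= => t'_gt0.
exact: divisor_residues_dvd t'_gt0 (dvdn_mulr _ (dvdnn _)).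
Qed.

Lemma ex_stable_divisor_residues :
  exists2 t0, euclid_ext s0 t0 & forall t, euclid_ext t0 t -> D t = D t0.
Proof.
have [t0 s0t0 t0_max] := ex_stable_measure (f := fun t => #|D t|) (euclid_ext_refl s0)
  euclid_ext_trans (fun t => max_card (mem (D t))).
exists t0 => // t t0t; apply/eqP; rewrite eq_sym eqEcard divisor_residues_ext //.
exact: t0_max.
Qed.

Section StableResidues.
Variable t0 : seq nat.
Hypotheses (s0t0 : euclid_ext s0 t0) (D_stable : forall t, euclid_ext t0 t -> D t = D t0).

Let s0_ext t : euclid_ext t0 t -> euclid_ext s0 t.
Proof. exact: euclid_ext_trans. Qed.

Definition residue_stabilizer : {set F} :=
  [set x | (x != 0) && [forall y in D t0, x * y \in D t0]].
Local Notation J := residue_stabilizer.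

Lemma J_neq0 : 0 \notin J.
Proof. by rewrite inE eqxx. Qed.

Lemma J1 : 1 \in J.
Proof. by rewrite inE oner_neq0; apply/forall_inP => y; rewrite mul1r. Qed.

Lemma JM : {in J &, forall x y, x * y \in J}.
Proof.
move=> x y; rewrite !inE => /andP[x_neq0 /forall_inP xD] /andP[y_neq0 /forall_inP yD].
by rewrite mulf_neq0 //; apply/forall_inP => z Dz; rewrite -mulrA xD ?yD.
Qed.

Lemma J_sub_D u : u \in J -> u \in D t0.
Proof.
have D1 : 1 \in D t0.
  apply/divisor_residuesP; first exact: prodn_ext_gt0 s0t0.
  by exists 1%N; rewrite ?dvd1n.
by rewrite inE => /andP[_ /forall_inP/(_ 1 D1)]; rewrite mulr1.
Qed.

(* Appending r multiplies the divisors by r, and D no longer grows. *)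
Lemma prime_step_J t r : euclid_ext t0 t -> prime r -> euclid_factor (prodn t) r ->
  (r%:R : F) \in J.
Proof.
move=> t0t r_pr rt; have t0tr := euclid_ext_rcons t0t r_pr rt.
have tr_gt0 := prodn_ext_gt0 (s0_ext t0tr).
have t_gt0 := prodn_ext_gt0 (s0_ext t0t).
have := q_ndvd_ext (s0_ext t0tr); rewrite prodn_rcons Euclid_dvdM // negb_or => /andP[_].
rewrite inE -natF_eq0 => -> /=; apply/forall_inP => y.
rewrite -{1}(D_stable t0t) -(D_stable t0tr) => /(divisor_residuesP _ t_gt0)[d dt ->].
apply/divisor_residuesP => //; exists (d * r)%N; last by rewrite natrM mulrC.
by rewrite prodn_rcons dvdn_mul.
Qed.

Lemma euclid_value_J t d : euclid_ext t0 t -> (0 < d)%N -> (d %| prodn t)%N ->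
  ((d + prodn t %/ d)%:R : F) \in J.
Proof. by apply: euclid_value_closed; [split; [exact: J1 | exact: JM] | exact: prime_step_J]. Qed.

Lemma shiftJ t u : euclid_ext t0 t -> u \in J -> u + N t / u \in J.
Proof.
move=> t0t /J_sub_D; have t_gt0 := prodn_ext_gt0 (s0_ext t0t).
rewrite -(D_stable t0t) => /(divisor_residuesP _ t_gt0)[d dt ->].
rewrite -(natr_euclid_value (s0_ext t0t) dt).
exact: euclid_value_J t0t (dvdn_gt0 t_gt0 dt) dt.
Qed.

Lemma sqr_shiftJ u : u \in J -> (N t0 + u ^+ 2) ^+ #|J| = 1.
Proof.
move=> Ju; have u_neq0 : u != 0 by apply: contraNneq J_neq0 => <-.
rewrite add_sqr_shift // exprMn !(exprJ_card J_neq0 JM) ?mulr1 // shiftJ //.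
exact: euclid_ext_refl.
Qed.

Lemma cardJ_lt : (#|J| < q)%N.
Proof.
have : (#|J| <= #|[set~ (0%R : F)]|)%N.
  by apply/subset_leq_card/subsetP => x; rewrite !inE => /andP[].
by rewrite cardsC1 card_Fp //; have := prime_gt0 q_prime; lia.
Qed.

Lemma N_t0_neq0 : N t0 != 0.
Proof. exact: N_neq0 s0t0. Qed.

Lemma natr_cardJ_neq0 : (#|J|%:R : F) != 0.
Proof. by rewrite natF_neq0 // (cardJ_gt0 J1) cardJ_lt. Qed.

Let sqr_shiftJ0 : {in J, forall u, (N t0 + u ^+ 2) ^+ #|J| = u ^+ 0}.
Proof. by move=> u Ju; rewrite expr0 sqr_shiftJ. Qed.

(* In the applications below, [dvdn_ltn_mul3] enumerates the surviving indices [ks]. *)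
Lemma sumJ_shift_identity ks h c s : {in J, forall u, (N t0 + u ^+ 2) ^+ h = u ^+ c} ->
    uniq ks -> (forall i, (i \in ks) = (i < h.+1)%N && (#|J| %| 2 * i + s)%N) ->
  (if (#|J| %| c + s)%N then #|J|%:R else 0) =
  \sum_(k <- ks) N t0 ^+ (h - k) *+ 'C(h, k) * #|J|%:R.
Proof.
move=> hc ks_uniq ksE; rewrite (sumJ_binom_sqr_eq J_neq0 J1 JM _ hc).
exact: (big_ord_filter (fun k => N t0 ^+ (h - k) *+ 'C(h, k) * #|J|%:R) ks_uniq ksE).
Qed.

Lemma cardJ_double : exists f, #|J| = (2 * f)%N.
Proof.
have [oddJ | evenJ] := boolP (odd #|J|); last first.
  by exists #|J|./2; move: (odd_double_half #|J|); rewrite (negbTE evenJ); lia.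
exfalso; have [k eJ] : exists k, #|J| = (2 * k).+1.
  by exists #|J|./2; move: (odd_double_half #|J|); rewrite oddJ; lia.
have ks_uniq : uniq [:: 0%N; #|J|] by rewrite /= !inE eJ.
have ksE i : (i \in [:: 0%N; #|J|]) = (i < #|J|.+1)%N && (#|J| %| 2 * i + 0)%N.
  rewrite ltnS !inE; have [i_le | i_gt] := leqP i #|J|; last by lia.
  by rewrite dvdn_ltn_mul3 ?inE; lia.
have /eqP := sumJ_shift_identity sqr_shiftJ0 ks_uniq ksE.
rewrite dvdn0 !big_cons big_nil subn0 subnn bin0 binn !mulr1n expr0 mul1r addr0.
rewrite eq_sym -subr_eq0 addrK mulf_eq0 expf_eq0 (negbTE N_t0_neq0) andbF.
by rewrite (negbTE natr_cardJ_neq0).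
Qed.

Lemma cardJ_neq2 : #|J| != 2%N.
Proof.
apply/eqP => eJ.
have two_neq0 : (2 : F) != 0 by apply: natF_neq0; have := cardJ_lt; rewrite eJ; lia.
apply: (sqr1_steps_contra s0t0 two_neq0) => t r t0t r_pr rt.
by rewrite -eJ (exprJ_card J_neq0 JM) // (prime_step_J t0t).
Qed.

Lemma expN_half_cardJ f : #|J| = (2 * f)%N -> (0 < f)%N ->
  N t0 ^+ f = - ('C(2 * f, f))%:R.
Proof.
move=> eJ f_gt0; have ks_uniq : uniq [:: 0%N; f; #|J|] by rewrite /= !inE eJ; lia.
have ksE i : (i \in [:: 0%N; f; #|J|]) = (i < #|J|.+1)%N && (#|J| %| 2 * i + 0)%N.
  rewrite ltnS !inE; have [i_le | i_gt] := leqP i #|J|; last by lia.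
  by rewrite dvdn_ltn_mul3 ?inE; lia.
have /eqP := sumJ_shift_identity sqr_shiftJ0 ks_uniq ksE.
rewrite dvdn0 !big_cons big_nil subn0 subnn bin0 binn !mulr1n expr0 mul1r addr0 eJ.
have -> : (2 * f - f = f)%N by lia.
rewrite [in N t0 ^+ _]mul2n -addnn exprD => /eqP E.
have : N t0 ^+ f * (N t0 ^+ f + ('C(2 * f, f))%:R) * (2 * f)%:R = 0.
  by rewrite -[RHS](subrr ((2 * f)%:R : F)) [X in _ = X - _]E; ring.
move/eqP; rewrite !mulf_eq0 expf_eq0 (negbTE N_t0_neq0) andbF -eJ (negbTE natr_cardJ_neq0).
by rewrite orbF addr_eq0 => /eqP.
Qed.

Lemma binom_half_cardJ f : #|J| = (2 * f)%N -> (2 <= f)%N ->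
  ('C(2 * f, f.+1))%:R = (2 * f)%:R * ('C(2 * f, f))%:R :> F.
Proof.
move=> eJ f_ge2; have Nf := expN_half_cardJ eJ (ltnW f_ge2).
have ks_uniq : uniq [:: 1%N; f.+1] by rewrite /= !inE; lia.
have ksE i :
    (i \in [:: 1%N; f.+1]) = (i < #|J|.+1)%N && (#|J| %| 2 * i + (2 * f - 2))%N.
  rewrite ltnS !inE eJ; have [i_le | i_gt] := leqP i (2 * f); last by lia.
  by rewrite dvdn_ltn_mul3 ?inE; lia.
have ndvd : ~~ (2 * f %| 0 + (2 * f - 2))%N by rewrite dvdn_ltn_mul3 ?inE; lia.
have /eqP := sumJ_shift_identity sqr_shiftJ0 ks_uniq ksE.
rewrite eJ (negbTE ndvd) !big_cons big_nil addr0 bin1.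
rewrite (_ : (2 * f - 1 = f.-1 + f)%N); last by lia.
rewrite (_ : (2 * f - f.+1 = f.-1)%N); last by lia.
rewrite exprD Nf => /eqP E.
set C := ('C(2 * f, f))%:R; set C' := ('C(2 * f, f.+1))%:R.
have : N t0 ^+ f.-1 * (2 * f)%:R * (C' - (2 * f)%:R * C) = 0 by rewrite [RHS]E; ring.
move/eqP; rewrite !mulf_eq0 expf_eq0 (negbTE N_t0_neq0) andbF -eJ (negbTE natr_cardJ_neq0).
by rewrite /= subr_eq0 => /eqP.
Qed.

Lemma cardJ_full : #|J|.+1 = q.
Proof.
have [f eJ] := cardJ_double.
have f_ge2 : (2 <= f)%N by have := cardJ_gt0 J1; have := cardJ_neq2; rewrite eJ; lia.
have := cardJ_lt; rewrite leq_eqVlt => /orP[/eqP // | e1_lt]; exfalso.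
have binE := binom_half_cardJ eJ f_ge2.
have : (f%:R * ('C(2 * f, f))%:R * (2 * f).+1%:R : F) = 0.
  transitivity ((f.+1 * 'C(2 * f, f.+1))%:R - (f * 'C(2 * f, f))%:R : F).
    by rewrite !natrM binE; ring.
  by rewrite mul_bin_left (_ : (2 * f - f = f)%N) ?subrr //; lia.
move/eqP; rewrite !mulf_eq0 !natF_eq0 (negbTE (prime_ndvd_bin _ _)) //; last lia.
by rewrite orbF !gtnNdvd //; lia.
Qed.

(* Here J is all of F_q^*, q = 2m + 1 and x ^+ m is the quadratic character. *)
Section FullStabilizer.
Variable m : nat.
Hypothesis eJ : #|J| = (2 * m)%N.

Let cardF : #|F| = (2 * m).+1.
Proof. by rewrite card_Fp // -cardJ_full eJ. Qed.

Lemma memJ u : u != 0 -> u \in J.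
Proof.
have JC0 : J \subset [set~ 0].
  by apply/subsetP => x Jx; rewrite in_setC1; apply: contraNneq J_neq0 => <-.
have -> : J = [set~ 0] by apply/eqP; rewrite eqEcard JC0 cardsC1 cardF eJ /=.
by rewrite in_setC1.
Qed.

Lemma divisor_residue_full t (u : F) : euclid_ext t0 t -> u != 0 ->
  exists2 d, (d %| prodn t)%N & u = d%:R.
Proof.
move=> t0t /memJ/J_sub_D; rewrite -(D_stable t0t); apply: divisor_residuesP.
exact: prodn_ext_gt0 (s0_ext t0t).
Qed.

Lemma oppN_half t : euclid_ext t0 t -> (- N t) ^+ m = -1.
Proof.
move=> t0t; have oppN_neq0 : - N t != 0 by rewrite oppr_eq0 (N_neq0 (s0_ext t0t)).
have [/(sqrf_of_expf_half cardF)[a oppN_sqr] | //] := expf_half_sign cardF oppN_neq0.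
have a_neq0 : a != 0 by apply: contraNneq oppN_neq0 => a0; rewrite oppN_sqr a0 expr0n.
have [d dt ad] := divisor_residue_full t0t a_neq0.
have t_gt0 := prodn_ext_gt0 (s0_ext t0t).
have := euclid_value_neq0 (s0_ext t0t) (dvdn_gt0 t_gt0 dt) dt.
rewrite (natr_euclid_value (s0_ext t0t) dt) -ad -[N t]opprK oppN_sqr.
by rewrite mulNr expr2 mulfK // subrr eqxx.
Qed.

Let two_neq0 : (2 : F) != 0.
Proof.
by have := cardJ_gt0 J1; rewrite eJ => m_gt0; apply: natF_neq0; rewrite -cardJ_full eJ; lia.
Qed.

Lemma prime_step_half t r : euclid_ext t0 t -> prime r -> euclid_factor (prodn t) r ->
  (r%:R : F) ^+ m = 1.
Proof.
move=> t0t r_pr rt; have r_neq0 : (r%:R : F) != 0.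
  by apply: contraTneq (prime_step_J t0t r_pr rt) => ->; exact: J_neq0.
have [// | rm] := expf_half_sign cardF r_neq0.
have := oppN_half (euclid_ext_rcons t0t r_pr rt).
rewrite prodn_rcons natrM -mulNr exprMn (oppN_half t0t) rm mulrNN mulr1 => one_eqN1.
have two_eq : (2 : F) = 1 - -1 by ring.
by move: two_neq0; rewrite two_eq {1}one_eqN1 subrr eqxx.
Qed.

Lemma sqr_shift_half u : u \in J -> (N t0 + u ^+ 2) ^+ m = u ^+ m.
Proof.
move=> Ju; have u_neq0 : u != 0 by apply: contraNneq J_neq0 => <-.
have half_closed : mulr_closed [pred x : F | x ^+ m == 1].
  by split=> [|x y]; rewrite !inE ?expr1n // exprMn => /eqP-> /eqP->; rewrite mulr1.
have [d dt ud] := divisor_residue_full (euclid_ext_refl t0) u_neq0.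
have t0_gt0 := prodn_ext_gt0 s0t0.
have : ((d + prodn t0 %/ d)%:R : F) ^+ m = 1.
  apply/eqP; apply: (euclid_value_closed half_closed _ (euclid_ext_refl t0)) => //.
    by move=> t r t0t r_pr rt; rewrite inE (prime_step_half t0t r_pr rt).
  exact: dvdn_gt0 t0_gt0 dt.
rewrite (natr_euclid_value s0t0 dt) -ud => shift_half.
by rewrite add_sqr_shift // exprMn shift_half mulr1.
Qed.

Lemma half_neq2 : m != 2%N.
Proof.
apply/eqP => m2; apply: (sqr1_steps_contra s0t0 two_neq0) => t r t0t r_pr rt.
by rewrite -m2 (prime_step_half t0t r_pr rt).
Qed.

Lemma half_lt3 : (m < 3)%N.
Proof.
rewrite ltnNge; apply/negP => m_ge3.
have ks_uniq : uniq [:: m.-1] by [].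
have ksE i : (i \in [:: m.-1]) = (i < m.+1)%N && (#|J| %| 2 * i + 2)%N.
  rewrite ltnS !inE eJ; have [i_le | i_gt] := leqP i m; last by lia.
  by rewrite dvdn_ltn_mul3 ?inE; lia.
have ndvd : ~~ (#|J| %| m + 2)%N by rewrite eJ dvdn_ltn_mul3 ?inE; lia.
have /eqP := sumJ_shift_identity sqr_shift_half ks_uniq ksE.
rewrite (negbTE ndvd) big_cons big_nil addr0 (_ : (m - m.-1 = 1)%N); last by lia.
rewrite -[in 'C(m, _)](prednK (ltnW (ltnW m_ge3))) binSn prednK; last by lia.
rewrite expr1 eq_sym !mulf_eq0 (negbTE natr_cardJ_neq0) orbF -mulr_natr mulf_eq0.
rewrite (negbTE N_t0_neq0) /=.
by apply/negP; apply: natF_neq0; have := cardJ_lt; rewrite eJ; lia.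
Qed.

End FullStabilizer.

Lemma stable_residues_contra : False.
Proof.
have [m eJ] := cardJ_double.
have := half_lt3 eJ; have := half_neq2 eJ; have := cardJ_neq2; have := cardJ_gt0 J1.
by rewrite eJ; lia.
Qed.

End StableResidues.

Lemma no_euclid_factor_contra : False.
Proof.
have [t0 s0t0 D_stable] := ex_stable_divisor_residues.
exact: stable_residues_contra D_stable.
Qed.

End EuclidFactorResidues.

Local Close Scope ring_scope.

Lemma euclid_ext_factor q s : prime q -> all prime s -> ~~ (q %| prodn s)%N ->
  exists2 t, euclid_ext s t & euclid_factor (prodn t) q.
Proof.
move=> q_pr s_pr q_ndvd; apply: NNPP => no_t.
by apply: (no_euclid_factor_contra q_pr s_pr q_ndvd) => t st tq; apply: no_t; exists t.
Qed.

Lemma euclid_ext_mem q s : prime q -> all prime s -> exists2 t, euclid_ext s t & q \in t.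
Proof.
move=> q_pr s_pr; have [q_in | q_notin] := boolP (q \in s).
  by exists s => //; exact: euclid_ext_refl.
have q_ndvd : ~~ (q %| prodn s).
  rewrite Euclid_dvd_prod // big_has; apply/hasPn => p ps.
  by rewrite dvdn_prime2 ?(allP s_pr p ps) //; apply: contraNneq q_notin => ->.
have [t st tq] := euclid_ext_factor q_pr s_pr q_ndvd.
by exists (rcons t q); [exact: euclid_ext_rcons | rewrite mem_rcons mem_head].
Qed.

(* The premise [all prime s] makes the specification satisfiable for every s,
   so that it can be fed to a choice function. *)
Definition ext_spec (s : seq nat) (k : nat) (t : seq nat) : Prop :=
  euclid_ext s t /\ (all prime s -> size s < size t /\ (prime k -> k \in t)).

Lemma ext_spec_ex s k : exists t, ext_spec s k t.
Proof.
have [s_pr | s_npr] := boolP (all prime s); last first.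
  by exists s; split=> [|s_pr]; [exact: euclid_ext_refl | rewrite s_pr in s_npr].
have [t1 st1 kt1] : exists2 t1, euclid_ext s t1 & prime k -> k \in t1.
  have [k_pr | _] := boolP (prime k); last by exists s => //; exact: euclid_ext_refl.
  by have [t1] := euclid_ext_mem k_pr s_pr; exists t1.
have [r r_pr rt1] := euclid_factor_exists (euclid_ext_prime s_pr st1).
exists (rcons t1 r); split=> [|_]; first exact: euclid_ext_rcons.
split=> [|/kt1 kt1']; first by rewrite size_rcons ltnS size_prefix // euclid_ext_prefix.
by rewrite mem_rcons in_cons kt1' orbT.
Qed.

Definition ext_next s k : seq nat :=
  proj1_sig (constructive_indefinite_description _ (ext_spec_ex s k)).

Lemma ext_nextP s k : ext_spec s k (ext_next s k).
Proof. exact: proj2_sig (constructive_indefinite_description _ (ext_spec_ex s k)). Qed.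

Section EuclidChain.
Variable P : seq nat.
Hypothesis P_prime : all prime P.

Fixpoint euclid_chain k := if k is k'.+1 then ext_next (euclid_chain k') k' else P.

Lemma euclid_chain_prime k : all prime (euclid_chain k).
Proof.
elim: k => //= k IH; have [chain_ext _] := ext_nextP (euclid_chain k) k.
exact: euclid_ext_prime chain_ext.
Qed.

Lemma euclid_chain_ext k k' : k <= k' -> euclid_ext (euclid_chain k) (euclid_chain k').
Proof.
move=> /subnK <-; elim: (k' - k) => [|n IH]; first exact: euclid_ext_refl.
by apply: euclid_ext_trans IH _; have [] := ext_nextP (euclid_chain (n + k)) (n + k).
Qed.

Lemma size_euclid_chain k : k <= size (euclid_chain k).
Proof.
elim: k => //= k IH.
have [_ /(_ (euclid_chain_prime k))[size_lt _]] := ext_nextP (euclid_chain k) k.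
exact: leq_ltn_trans size_lt.
Qed.

Lemma euclid_chain_mem k : prime k -> k \in euclid_chain k.+1.
Proof. by have [_ /(_ (euclid_chain_prime k))[_]] := ext_nextP (euclid_chain k) k. Qed.

Definition euclid_seq i := nth 0 (euclid_chain i.+1) i.

Lemma nth_euclid_chain k i :
  i < size (euclid_chain k) -> nth 0 (euclid_chain k) i = euclid_seq i.
Proof.
move=> i_lt; have i_lt' : i < size (euclid_chain i.+1) := size_euclid_chain i.+1.
rewrite /euclid_seq; have [k_le | k_gt] := leqP k i.+1.
  have /prefixP[e ->] := euclid_ext_prefix (euclid_chain_ext k_le).
  by rewrite nth_cat i_lt.
have /prefixP[e ->] := euclid_ext_prefix (euclid_chain_ext (ltnW k_gt)).
by rewrite nth_cat i_lt'.
Qed.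

Lemma euclid_seq_gen : gen_euclid_seq P euclid_seq.
Proof.
split; [|split].
- move=> i; apply: (all_nthP 0 (euclid_chain_prime i.+1)); exact: size_euclid_chain.
- have -> : [seq euclid_seq i | i <- iota 0 (size P)] = [seq nth 0 P i | i <- iota 0 (size P)].
    apply/eq_in_map => i; rewrite mem_iota add0n => /andP[_ i_lt].
    by rewrite -(nth_euclid_chain (k := 0)).
  by rewrite -/(mkseq _ _) mkseq_nth.
move=> j Pj; have j_lt : j < size (euclid_chain j.+1) := size_euclid_chain j.+1.
have j_range : size (euclid_chain 0) <= j < size (euclid_chain j.+1) by rewrite Pj.
have [_ [d [d_gt0 dj q_dvd]]] := euclid_ext_nth (euclid_chain_ext (leq0n j.+1)) j_range.
have prodE : prodn (take j (euclid_chain j.+1)) = \prod_(i < j) euclid_seq i.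
  rewrite (big_nth 0) size_take j_lt big_mkord; apply: eq_bigr => i _.
  by rewrite nth_take // nth_euclid_chain // (ltn_trans (ltn_ord i) j_lt).
by exists d; rewrite -prodE.
Qed.

Lemma euclid_seq_surj q : prime q -> exists i, euclid_seq i = q.
Proof. by move=> /euclid_chain_mem/(nthP 0)[i i_lt <-]; exists i; rewrite nth_euclid_chain. Qed.

End EuclidChain.

Theorem theorem1 (P : seq nat) (hP : all prime P) (huniq : uniq P) :
  exists p : nat -> nat, gen_euclid_seq P p /\
    (forall q, prime q -> exists i, p i = q).
Proof.
by exists (euclid_seq P); split; [exact: euclid_seq_gen | exact: euclid_seq_surj].
Qed.
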